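(* Let $M$ be a binary matroid and let $d=\dim P(M)$. If the base graph $G(M)$ has a vertex with exactly $d$ neighbours, then $P(M)$ is indecomposable.
   Context: A matroid is binary if it is representable over $\mathbb{F}_2$. For a matroid $N$ on $E=\{1,\dots,n\}$, $P(N)=\mathrm{conv}\{\sum_{i\in B}e_i : B \text{ a base of } N\}\subset\mathbb{R}^n$. The base graph $G(M)$ has the bases of $M$ as vertices, two bases adjacent iff their symmetric difference has exactly two elements (it is the 1-skeleton of $P(M)$). A matroid base polytope decomposition of $P(M)$ is an expression $P(M)=\bigcup_{i=1}^t P(M_i)$ with each $M_i$ a matroid on $E$ and $P(M_i)\cap P(M_j)$ a face of both $P(M_i)$ and $P(M_j)$ for all $i\neq j$. $P(M)$ is decomposable if it has such a decomposition with $t\ge 2$ and every $P(M_i)\neq P(M)$, and indecomposable otherwise. *)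

From HB Require Import structures.
From mathcomp Require Import all_boot all_order all_algebra.
Set Implicit Arguments. Unset Strict Implicit. Unset Printing Implicit Defensive.
Import Order.TTheory GRing.Theory Num.Theory.
Local Open Scope ring_scope.

Definition is_matroid (n : nat) (Bs : {set {set 'I_n}}) : Prop :=
  Bs != set0 /\
  forall B1 B2, B1 \in Bs -> B2 \in Bs -> forall x, x \in B1 :\: B2 ->
    exists2 y, y \in B2 :\: B1 & (y |: (B1 :\ x)) \in Bs.

Definition col_indep (m n : nat) (A : 'M['F_2]_(m, n)) (B : {set 'I_n}) : Prop :=
  forall c : 'cV['F_2]_n, (forall j, j \notin B -> c j 0 = 0) ->
    A *m c = 0 -> c = 0.

Definition binary (n : nat) (Bs : {set {set 'I_n}}) : Prop :=
  exists m (A : 'M['F_2]_(m, n)),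
    forall B : {set 'I_n}, B \in Bs <-> (col_indep A B /\ #|B| = \rank A).

Definition chi (R : realFieldType) (n : nat) (B : {set 'I_n}) : 'rV[R]_n :=
  \row_j (if j \in B then 1 else 0).

Definition base_polytope (R : realFieldType) (n : nat) (Bs : {set {set 'I_n}})
  (x : 'rV[R]_n) : Prop :=
  exists lam : {set 'I_n} -> R,
    [/\ forall B, 0 <= lam B,
        forall B, B \notin Bs -> lam B = 0,
        \sum_B lam B = 1
      & x = \sum_B lam B *: chi R B].

Arguments base_polytope R [n] Bs x.

Definition dotv (R : realFieldType) (n : nat) (a x : 'rV[R]_n) : R :=
  \sum_j a 0 j * x 0 j.

(* F is a face of P: the intersection of P with a supporting hyperplane
   (a = 0 allowed, giving P itself (b = 0) and the empty face (b = 1)). *)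
Definition is_face (R : realFieldType) (n : nat) (P F : 'rV[R]_n -> Prop) : Prop :=
  exists (a : 'rV[R]_n) (b : R),
    (forall y, P y -> dotv a y <= b) /\
    (forall x, F x <-> (P x /\ dotv a x = b)).

Definition aff_indep_pts (R : realFieldType) (n : nat) (P : 'rV[R]_n -> Prop)
  (k : nat) : Prop :=
  exists p : 'I_k.+1 -> 'rV[R]_n,
    (forall i, P (p i)) /\
    row_free (\matrix_(i < k) (p (lift ord0 i) - p ord0)).

Definition poly_dim (R : realFieldType) (n : nat) (P : 'rV[R]_n -> Prop)
  (d : nat) : Prop :=
  aff_indep_pts P d /\ ~ aff_indep_pts P d.+1.

Definition symdiff (n : nat) (A B : {set 'I_n}) : {set 'I_n} :=
  (A :\: B) :|: (B :\: A).

Definition base_graph_degree (n : nat) (Bs : {set {set 'I_n}}) (B : {set 'I_n})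
  : nat :=
  #|[set B' in Bs | #|symdiff B B'| == 2]|.

Definition decomposable (R : realFieldType) (n : nat) (Bs : {set {set 'I_n}}) : Prop :=
  exists (t : nat) (Ms : 'I_t -> {set {set 'I_n}}),
    [/\ (2 <= t)%N,
        forall i, is_matroid (Ms i),
        forall x, base_polytope R Bs x <-> exists i, base_polytope R (Ms i) x,
        forall i, ~ (forall x, base_polytope R (Ms i) x <-> base_polytope R Bs x)
      & forall i j, i != j ->
          is_face (base_polytope R (Ms i))
                  (fun x => base_polytope R (Ms i) x /\ base_polytope R (Ms j) x) /\
          is_face (base_polytope R (Ms j))
                  (fun x => base_polytope R (Ms i) x /\ base_polytope R (Ms j) x)].

Arguments decomposable R [n] Bs.

Definition indecomposable (R : realFieldType) (n : nat) (Bs : {set {set 'I_n}}) : Prop :=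
  ~ decomposable R Bs.

Arguments indecomposable R [n] Bs.

From HB Require Import structures.
From mathcomp Require Import all_boot all_order all_algebra.
Import Order.TTheory GRing.Theory Num.Theory.
From mathcomp Require Import ring.

(* Let B0 be a base of the binary matroid M with exactly d = dim P(M)
   neighbours in the base graph, and suppose P(M) = P(M_1) u ... u P(M_t).
   1. Binary (indeed vector) matroids satisfy symmetric basis exchange; hence
      every e_B - e_B0 is a sum of edge directions e_N - e_B0 at B0, so the d
      edge directions span P(M) - e_B0 and, as dim P(M) = d, they are linearly
      independent ([dir_mx_free]).
   2. Independence forces, for every base B <> B0, some x in B0 - B to have a
      single partner y in B - B0 with B0 - x + y a base: two partners for each
      x would give 2|B0 - B| independent directions e_y - e_x inside a space
      of dimension 2|B0 - B| - 1 ([unique_partner]).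
   3. Take the probe point e_B0 + eps * sum of the edge directions.  Some
      P(M_i) contains it; then e_B0 is a vertex of P(M_i) (the probe is too
      close to e_B0), every edge at B0 lies in P(M_i) (the coordinates of the
      probe along the edges are unique and nonzero, while by 2. the directions
      of M_i at B0 are spanned by its own edges), and finally by induction
      along unique partners every base of M is a base of M_i
      ([submatroid_full]).  So P(M_i) = P(M), and the decomposition is not
      proper. *)

Set Implicit Arguments. Unset Strict Implicit. Unset Printing Implicit Defensive.
Local Open Scope ring_scope.

Definition swap (n : nat) (B : {set 'I_n}) (x y : 'I_n) : {set 'I_n} :=
  y |: (B :\ x).

Section VectorMatroid.
Variables (F : fieldType) (m n : nat) (A : 'M[F]_(m, n)).

Definition supported (B : {set 'I_n}) (c : 'cV[F]_n) : Prop :=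
  forall j, j \notin B -> c j 0 = 0.

Definition indep_cols (B : {set 'I_n}) : Prop :=
  forall c, supported B c -> A *m c = 0 -> c = 0.

Definition vbase (B : {set 'I_n}) : Prop := indep_cols B /\ #|B| = \rank A.

Lemma coords_uniq B c c' : indep_cols B -> supported B c -> supported B c' ->
  A *m c = A *m c' -> c = c'.
Proof.
move=> indB sc sc' e; apply/eqP; rewrite -subr_eq0; apply/eqP; apply: indB.
  by move=> j jB; rewrite !mxE sc // sc' // subrr.
by rewrite mulmxBr e subrr.
Qed.

Lemma base_coords B : vbase B ->
  exists2 K : 'M[F]_n, (forall i j, i \notin B -> K i j = 0) & A *m K = A.
Proof.
move=> [indB cardB].
pose Sel : 'M[F]_(n, #|B|) := \matrix_(j, i) ((j == enum_val i)%:R).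
have Sel0 i k : i \notin B -> Sel i k = 0.
  by rewrite mxE; case: eqP => // -> /negP; rewrite enum_valP.
have free_sel : row_free (A *m Sel)^T.
  apply/inj_row_free => w /(congr1 trmx); rewrite trmx_mul trmxK trmx0 -mulmxA.
  move=> /indB w0; apply/rowP => i; rewrite mxE.
  have /matrixP/(_ (enum_val i) 0) : Sel *m w^T = 0.
    by apply: w0 => j jB; rewrite mxE big1 // => k _; rewrite Sel0 ?mul0r.
  rewrite !mxE (bigD1 i) //= big1 ?addr0 => [|k ki]; first by rewrite !mxE eqxx mul1r.
  by rewrite mxE (inj_eq enum_val_inj) eq_sym (negbTE ki) mul0r.
have sub_sel : ((A *m Sel)^T <= A^T)%MS by rewrite trmx_mul submxMl.
have : (A^T <= (A *m Sel)^T)%MS.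
  rewrite -(geq_leqif (mxrank_leqif_sup sub_sel)) mxrank_tr.
  by move/eqP: free_sel ->; rewrite cardB.
case/submxP => D AD; exists (Sel *m D^T).
  by move=> i j iB; rewrite mxE big1 // => k _; rewrite Sel0 ?mul0r.
by rewrite mulmxA -[A *m Sel]trmxK -trmx_mul -AD trmxK.
Qed.

Lemma vbase_swap B u z c : vbase B -> u \in B -> z \notin B -> supported B c ->
  A *m c = col z A -> c u 0 != 0 -> vbase (swap B u z).
Proof.
move=> [indB cardB] uB zB sc Ac cu; split; last first.
  by rewrite cardsU1 !inE negb_and zB orbT /= -cardB (cardsD1 u B) uB.
move=> e se Ae.
have uz : u != z by apply: contraNneq zB => <-.
have eu : e u 0 = 0 by apply: se; rewrite !inE eqxx (negbTE uz).
pose f := e - e z 0 *: delta_mx z 0 + e z 0 *: c.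
have f0 : f = 0.
  apply: indB; last first.
    by rewrite /f mulmxDr mulmxBr Ae -!scalemxAr Ac -colE sub0r addNr.
  move=> j jB; rewrite /f !mxE (sc j jB) mulr0 addr0.
  have [->|jz] := eqVneq j z; first by rewrite !eqxx mulr1 subrr.
  by rewrite mulr0 subr0 se // !inE negb_or jz negb_and jB orbT.
have ez : e z 0 = 0.
  move/matrixP: f0 => /(_ u 0); rewrite !mxE eu (negbTE uz) mulr0 subrr add0r.
  by move/eqP; rewrite mulf_eq0 (negbTE cu) orbF => /eqP.
by move: f0; rewrite /f ez !scale0r subr0 addr0.
Qed.

Lemma vbase_sym_exchange B1 B2 x : vbase B1 -> vbase B2 -> x \in B1 :\: B2 ->
  exists2 y, y \in B2 :\: B1 & vbase (swap B1 x y) /\ vbase (swap B2 y x).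
Proof.
move=> b1 b2; rewrite inE => /andP [xB2 xB1].
have [K1 K1s AK1] := base_coords b1; have [K2 K2s AK2] := base_coords b2.
have col_supp (K : 'M[F]_n) (B : {set 'I_n}) z :
    (forall i j, i \notin B -> K i j = 0) -> supported B (col z K).
  by move=> Ks i iB; rewrite mxE Ks.
have delta_supp z (B : {set 'I_n}) : z \in B -> supported B (delta_mx z 0).
  by move=> zB j jB; rewrite mxE; case: eqP => // ej; move: jB; rewrite ej zB.
have AK (K : 'M[F]_n) z : A *m K = A -> A *m col z K = col z A.
  by move=> AKA; rewrite colE mulmxA AKA -colE.
have gx : K1 *m col x K2 = delta_mx x 0.
  apply: (coords_uniq b1.1); [|exact: delta_supp|].
    by move=> i iB; rewrite mxE big1 // => k _; rewrite K1s ?mul0r.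
  by rewrite mulmxA AK1 AK // colE.
have K1B1 z : z \in B1 -> col z K1 = delta_mx z 0.
  move=> zB; apply: (coords_uniq b1.1); [exact: col_supp|exact: delta_supp|].
  by rewrite AK // colE.
have : (K1 *m col x K2) x 0 != 0 by rewrite gx mxE !eqxx oner_neq0.
rewrite mxE; have [y /= nz _|all0] := pickP (fun z => K1 x z * col x K2 z 0 != 0).
  2: by rewrite big1 ?eqxx // => z _; apply/eqP/negbFE/all0.
move: nz; rewrite mulf_eq0 negb_or => /andP [cy dy].
have yB2 : y \in B2 by apply: contraNT dy; rewrite mxE => /K2s ->.
have yB1 : y \notin B1.
  have xy : x != y by apply: contraNneq xB2 => ->.
  by apply: contra cy => /K1B1 /matrixP /(_ x 0); rewrite !mxE (negbTE xy) => ->.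
exists y; first by rewrite inE yB1.
split; first by apply: vbase_swap b1 xB1 yB1 (col_supp _ _ _ K1s) (AK _ _ AK1) _;
  rewrite mxE.
exact: vbase_swap b2 yB2 xB2 (col_supp _ _ _ K2s) (AK _ _ AK2) dy.
Qed.

End VectorMatroid.

Lemma diff_card_ind (n : nat) (B0 : {set 'I_n}) (P : {set 'I_n} -> Prop) :
  (forall B, (forall B', (#|B' :\: B0| < #|B :\: B0|)%N -> P B') -> P B) ->
  forall B, P B.
Proof.
move=> IH B; elim: {B}_.+1 {-2}B (ltnSn #|B :\: B0|) => // k IHk B ltB.
by apply: IH => B' ltB'; apply: IHk; exact: leq_trans ltB' _.
Qed.
Arguments diff_card_ind {n} B0 {P}.

Lemma swapK (n : nat) (B : {set 'I_n}) x y : y \in B -> x \notin B ->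
  swap (swap B y x) x y = B.
Proof.
move=> yB xB; apply/setP => j; rewrite !inE.
have [->|jy] := eqVneq j y; first by rewrite yB.
by have [->|jx] /= := eqVneq j x; [rewrite (negbTE xB)|].
Qed.

Lemma swap_diff (n : nat) (B0 B : {set 'I_n}) x y : x \in B0 ->
  swap B y x :\: B0 = (B :\: B0) :\ y.
Proof.
move=> xB0; apply/setP => j; rewrite !inE.
have [->|_] := eqVneq j x; first by rewrite xB0 !andbF.
by case: (j \in B0); case: (j != y).
Qed.

Lemma card_swap_diff (n : nat) (B0 B : {set 'I_n}) x y : x \in B0 -> y \in B ->
  y \notin B0 -> #|B :\: B0| = (#|swap B y x :\: B0|).+1.
Proof.
by move=> xB0 yB yB0; rewrite swap_diff // (cardsD1 y (B :\: B0)) !inE yB0 yB.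
Qed.

Section Matroids.
Variable n : nat.
Implicit Types (Bs : {set {set 'I_n}}) (B : {set 'I_n}).

Section BaseExchange.
Variable Bs : {set {set 'I_n}}.
Hypothesis matroidBs : is_matroid Bs.

Lemma bases_diff_neq0 B1 B2 : B1 \in Bs -> B2 \in Bs -> B1 != B2 ->
  exists x, x \in B1 :\: B2.
Proof.
move=> B1s B2s neqB; have [D0|[x xD]] := set_0Vmem (B1 :\: B2); last by exists x.
have /set0Pn [z zD] : B2 :\: B1 != set0.
  apply: contra neqB; rewrite setD_eq0 => sub21.
  by rewrite eqEsubset sub21 -setD_eq0 D0 eqxx.
by have [y] := matroidBs.2 B2 B1 B2s B1s z zD; rewrite D0 inE.
Qed.

Lemma bases_card_diff B1 B2 : B1 \in Bs -> B2 \in Bs ->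
  #|B1 :\: B2| = #|B2 :\: B1|.
Proof.
move=> + B2s; move: B1; apply: (diff_card_ind B2) => B1 IH B1s.
have [<-|neqB] := eqVneq B1 B2; first by rewrite setDv.
have [x xD] := bases_diff_neq0 B1s B2s neqB.
have [y yD sB1] := matroidBs.2 B1 B2 B1s B2s x xD.
move: xD yD; rewrite !inE => /andP [xB2 xB1] /andP [yB1 yB2].
rewrite (card_swap_diff yB2 xB1 xB2) (IH _ _ sB1); last first.
  by rewrite (card_swap_diff yB2 xB1 xB2).
rewrite (cardsD1 y (B2 :\: B1)) !inE yB1 yB2; congr (_.+1); apply: eq_card => j.
rewrite !inE negb_or negb_and negbK; have [->|jy] := eqVneq j y; first by [].
by have [->|//] := eqVneq j x; rewrite (negbTE xB2) !andbF.
Qed.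

End BaseExchange.

Definition sym_exchange Bs : Prop :=
  forall B1 B2 x, B1 \in Bs -> B2 \in Bs -> x \in B1 :\: B2 ->
  exists2 y, y \in B2 :\: B1 & swap B1 x y \in Bs /\ swap B2 y x \in Bs.

Lemma binary_sym_exchange Bs : binary Bs -> sym_exchange Bs.
Proof.
move=> [m [A HA]] B1 B2 x /HA b1 /HA b2 xD.
have [y yD [s1 s2]] := vbase_sym_exchange b1 b2 xD.
by exists y => //; split; apply/HA.
Qed.

End Matroids.

Section IncidenceVectors.
Variables (R : realFieldType) (n : nat).
Implicit Types (S : {set {set 'I_n}}) (B : {set 'I_n}).

Definition unitv (z : 'I_n) : 'rV[R]_n := chi R [set z].

Lemma chi_swap B x y : x \in B -> y \notin B ->
  chi R (swap B x y) = chi R B - unitv x + unitv y.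
Proof.
move=> xB yB; apply/rowP => j; rewrite !mxE !inE.
have yx : (y == x) = false by apply: contraNF yB => /eqP ->.
have [->|jy] /= := eqVneq j y; first by rewrite (negbTE yB) yx subr0 add0r.
by rewrite addr0; have [->|] /= := eqVneq j x; rewrite ?xB ?subrr ?subr0.
Qed.

Lemma swap_inj B x y x' y' : x \in B -> y \notin B -> x' \in B -> y' \notin B ->
  swap B x y = swap B x' y' -> x = x' /\ y = y'.
Proof.
move=> xB yB xB' yB' e.
have yx : y != x by apply: contraNneq yB => ->.
split.
  apply/eqP; apply: contraT => xx'.
  have : x \in swap B x' y' by rewrite !inE eq_sym xx' xB orbT.
  by rewrite -e !inE eqxx /= orbF eq_sym (negbTE yx).
have : y \in swap B x' y' by rewrite -e !inE eqxx.
by rewrite !inE (negbTE yB) andbF orbF => /eqP.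
Qed.

Lemma conv_recentre (lam : {set 'I_n} -> R) (v : 'rV[R]_n) : \sum_B lam B = 1 ->
  \sum_B lam B *: chi R B - v = \sum_B lam B *: (chi R B - v).
Proof.
move=> lam1; under [RHS]eq_bigr do rewrite scalerBr.
by rewrite sumrB -scaler_suml lam1 scale1r.
Qed.

Lemma chi_in_polytope S B : B \in S -> base_polytope R S (chi R B).
Proof.
move=> BS; exists (fun B' => (B' == B)%:R); split.
- by move=> B'; rewrite ler0n.
- by move=> B' B'S; case: eqP => // eB; move: B'S; rewrite eB BS.
- by rewrite (bigD1 B) //= eqxx big1 ?addr0 // => B' /negbTE ->.
- rewrite (bigD1 B) //= eqxx scale1r big1 ?addr0 // => B' /negbTE ->.
  by rewrite scale0r.
Qed.

Lemma polytope_chi S B : base_polytope R S (chi R B) -> B \in S.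
Proof.
move=> [lam [lam_ge0 lamS lam1 eB]].
have mismatch j : \sum_B' lam B' * ((j \in B') != (j \in B))%:R = 0.
  have := congr1 (fun z : 'rV[R]_n => z 0 j) eB; rewrite summxE !mxE.
  under eq_bigr do rewrite !mxE.
  case: (j \in B) => [/esym e1|/esym e0]; last first.
    by rewrite -[RHS]e0; apply: eq_bigr => B' _; case: (j \in B').
  rewrite -[RHS](subrr 1) -[X in _ = X - _]lam1 -[X in _ = _ - X]e1 -sumrB.
  apply: eq_bigr => B' _.
  by case: (j \in B'); rewrite /= ?mulr1 ?mulr0 ?subrr ?subr0.
have [B' lamB'|lam0] := pickP (fun B' => lam B' != 0); last first.
  have : \sum_B' lam B' = 0 by apply: big1 => B' _; apply/eqP/negbFE/lam0.
  by rewrite lam1 => /eqP; rewrite oner_eq0.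
suff eB' : B' = B by apply: contraTT lamB' => /lamS; rewrite eB' => ->; rewrite eqxx.
apply/setP => j; apply/eqP; apply: contraTT lamB' => neq.
have ge0 C : true -> 0 <= lam C * ((j \in C) != (j \in B))%:R.
  by move=> _; rewrite mulr_ge0.
move/psumr_eq0P: (mismatch j) => /(_ ge0 B' isT).
by rewrite neq mulr1 => ->; rewrite eqxx.
Qed.

Lemma polytope_sub_bases S S' :
  (forall z, base_polytope R S z -> base_polytope R S' z) -> {subset S <= S'}.
Proof. by move=> sub B BS; apply/polytope_chi/sub/chi_in_polytope. Qed.

Lemma unit_diffs_rank (U : {set 'I_n}) x0 : x0 \in U ->
  exists W : 'M[R]_(#|U :\ x0|, n),
    forall x y, x \in U -> y \in U -> (unitv y - unitv x <= W)%MS.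
Proof.
move=> x0U; pose W := \matrix_(i < #|U :\ x0|) (unitv (enum_val i) - unitv x0).
exists W; have toW z : z \in U -> (unitv z - unitv x0 <= W)%MS.
  move=> zU; have [->|zx0] := eqVneq z x0; first by rewrite subrr sub0mx.
  have zU' : z \in U :\ x0 by rewrite in_setD1 zx0 zU.
  by apply: (eq_row_sub (enum_rank_in zU' z)); rewrite rowK enum_rankK_in.
move=> x y xU yU.
have -> : unitv y - unitv x = (unitv y - unitv x0) - (unitv x - unitv x0).
  by rewrite opprB addrA subrK.
by apply: addmx_sub; rewrite ?eqmx_opp toW.
Qed.

End IncidenceVectors.

Section AtVertex.
Variables (R : realFieldType) (n : nat) (Bs : {set {set 'I_n}}) (B0 : {set 'I_n}).
Hypotheses (matroidBs : is_matroid Bs) (B0s : B0 \in Bs).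
Implicit Types (S Q : {set {set 'I_n}}) (B N : {set 'I_n}).

Definition neighbours : {set {set 'I_n}} := [set B in Bs | #|symdiff B0 B| == 2].

Definition dir B : 'rV[R]_n := chi R B - chi R B0.

Definition nspan S (z : 'rV[R]_n) : Prop :=
  exists a : {set 'I_n} -> R, (forall N, N \notin S -> a N = 0) /\
    z = \sum_(N in neighbours) a N *: dir N.

Lemma nspan0 S : nspan S 0.
Proof.
by exists (fun=> 0); split => //; rewrite big1 // => N _; rewrite scale0r.
Qed.

Lemma nspanD S z1 z2 : nspan S z1 -> nspan S z2 -> nspan S (z1 + z2).
Proof.
move=> [a1 [a1S ->]] [a2 [a2S ->]]; exists (fun N => a1 N + a2 N); split.
  by move=> N NS; rewrite a1S // a2S // addr0.
by rewrite -big_split; apply: eq_bigr => N _; rewrite scalerDl.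
Qed.

Lemma nspanZ S c z : nspan S z -> nspan S (c *: z).
Proof.
move=> [a [aS ->]]; exists (fun N => c * a N); split.
  by move=> N NS; rewrite aS // mulr0.
by rewrite scaler_sumr; apply: eq_bigr => N _; rewrite scalerA.
Qed.

Lemma nspan_dir S N : N \in neighbours -> N \in S -> nspan S (dir N).
Proof.
move=> Nnb NS; exists (fun M => (M == N)%:R); split.
  by move=> M MS; case: eqP => // eM; move: MS; rewrite eM NS.
rewrite (bigD1 N) //= eqxx scale1r big1 ?addr0 // => M /andP [_ /negbTE ->].
by rewrite scale0r.
Qed.

Lemma polytope_nspan S z : (forall B, B \in S -> nspan S (dir B)) ->
  base_polytope R S z -> nspan S (z - chi R B0).
Proof.
move=> spanS [lam [_ lamS lam1 ->]]; rewrite conv_recentre //.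
apply: (big_ind (nspan S)); [exact: nspan0|exact: nspanD|] => B _.
have [BS|BS] := boolP (B \in S); first exact/nspanZ/spanS.
by rewrite lamS // scale0r; exact: nspan0.
Qed.

Lemma swap_neighbour x y : x \in B0 -> y \notin B0 -> swap B0 x y \in Bs ->
  swap B0 x y \in neighbours.
Proof.
move=> xB0 yB0 sB; rewrite inE sB /=.
have yx : y != x by apply: contraNneq yB0 => ->.
suff -> : symdiff B0 (swap B0 x y) = [set x; y] by rewrite cards2 (eq_sym x y) yx.
apply/setP => j; rewrite /symdiff !inE.
have [->|jx] := eqVneq j x; first by rewrite eq_sym (negbTE yx) xB0.
by have [->|jy] := eqVneq j y; [rewrite (negbTE yB0)|case: (j \in B0)].
Qed.

Lemma dir_swap x y : x \in B0 -> y \notin B0 ->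
  dir (swap B0 x y) = unitv R y - unitv R x.
Proof.
by move=> xB0 yB0; rewrite /dir chi_swap //; apply/rowP => j; rewrite !mxE; ring.
Qed.

Lemma dir_split B x y : x \in B0 -> x \notin B -> y \in B -> y \notin B0 ->
  dir B = dir (swap B y x) + dir (swap B0 x y).
Proof.
move=> xB0 xB yB yB0; rewrite /dir !chi_swap //.
by apply/rowP => j; rewrite !mxE; ring.
Qed.

Lemma bases_nspan : sym_exchange Bs -> forall B, B \in Bs -> nspan Bs (dir B).
Proof.
move=> symBs; apply: (diff_card_ind B0) => B IH Bs_B.
have [->|neqB] := eqVneq B B0; first by rewrite /dir subrr; exact: nspan0.
have [x xD] : exists x, x \in B0 :\: B.
  by apply: (bases_diff_neq0 matroidBs) => //; rewrite eq_sym.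
have [y yD [sB0 sB]] := symBs B0 B x B0s Bs_B xD.
move: xD yD; rewrite !inE => /andP [xB xB0] /andP [yB0 yB].
rewrite (dir_split xB0 xB yB yB0); apply: nspanD; last first.
  by apply: nspan_dir => //; exact: swap_neighbour.
by apply: IH sB; rewrite (card_swap_diff xB0 yB yB0).
Qed.

Definition dir_mx : 'M[R]_(#|neighbours|, n) :=
  \matrix_(k < #|neighbours|) dir (enum_val k).

Lemma nspan_sub S z : nspan S z -> (z <= dir_mx)%MS.
Proof.
move=> [a [_ ->]]; apply/submxP; exists (\row_k a (enum_val k)).
rewrite mulmx_sum_row big_enum_val; apply: eq_bigr => k _.
by rewrite mxE rowK.
Qed.

(* If dim P(M) >= deg B0 then the edge directions at B0 are linearly
   independent: P(M) - e_B0 lies in their span. *)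
Lemma dir_mx_free : sym_exchange Bs ->
  aff_indep_pts (base_polytope R Bs) #|neighbours| -> row_free dir_mx.
Proof.
move=> symBs [p [pP free_p]].
have toB0 z : base_polytope R Bs z -> (z - chi R B0 <= dir_mx)%MS.
  by move=> zP; apply/(nspan_sub (S := Bs))/polytope_nspan => //; exact: bases_nspan.
set Del := \matrix_(i < _) _ in free_p.
have sub : (Del <= dir_mx)%MS.
  apply/row_subP => i; rewrite rowK.
  have -> : p (lift ord0 i) - p ord0 =
      (p (lift ord0 i) - chi R B0) - (p ord0 - chi R B0) by rewrite opprB addrA subrK.
  by apply: addmx_sub; rewrite ?eqmx_opp toB0.
move/eqP: free_p => rankDel.
by rewrite /row_free eqn_leq rank_leq_row -{1}rankDel mxrankS.
Qed.

Definition partners B x : {set 'I_n} := [set y in B :\: B0 | swap B0 x y \in Bs].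

Lemma partnersP B x y : y \in partners B x ->
  [/\ y \in B, y \notin B0 & swap B0 x y \in Bs].
Proof. by rewrite !inE => /andP [/andP [-> ->] ->]. Qed.

Lemma partners_neq0 B x : B \in Bs -> x \in B0 :\: B -> partners B x != set0.
Proof.
move=> Bs_B xD; have [y yD sB0] := matroidBs.2 B0 B B0s Bs_B x xD.
by apply/set0Pn; exists y; rewrite inE yD sB0.
Qed.

(* If x has the single partner y, no base avoiding x lies, outside B0, within
   (B - B0) - y: exchanging x into B0 would produce a second partner. *)
Lemma sole_partner_block B B' x y : partners B x = [set y] -> B' \in Bs ->
  x \in B0 :\: B' -> B' :\: B0 \subset (B :\: B0) :\ y -> False.
Proof.
move=> Px Bs_B' xD sub.
have [z zD sB0] := matroidBs.2 B0 B' B0s Bs_B' x xD.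
move: (subsetP sub z zD); rewrite in_setD1 => /andP [zy zD'].
have : z \in partners B x by rewrite inE zD' sB0.
by rewrite Px inE (negbTE zy).
Qed.

Definition partner_swaps B : {set {set 'I_n}} :=
  [set swap B0 x y | x in B0 :\: B, y in partners B x].

Lemma partner_swaps_sub B : partner_swaps B \subset neighbours.
Proof.
apply/subsetP => N /imset2P [x y xD /partnersP [_ yB0 sB0] ->].
by apply: swap_neighbour => //; move: xD; rewrite inE => /andP [].
Qed.

Lemma partner_swaps_card B :
  (forall x, x \in B0 :\: B -> 1 < #|partners B x|)%N ->
  (2 * #|B0 :\: B| <= #|partner_swaps B|)%N.
Proof.
move=> two; set X := B0 :\: B.
pose partner (bx : bool * 'I_n) := nth bx.2 (enum (partners B bx.2)) bx.1.
have partnerP (bx : bool * 'I_n) : bx.2 \in X -> partner bx \in partners B bx.2.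
  move=> xX; rewrite -mem_enum mem_nth // -cardE.
  by apply: leq_ltn_trans (two _ xX); case: bx.1.
pose g (bx : bool * 'I_n) := swap B0 bx.2 (partner bx).
rewrite -[X in (X * _)%N]card_bool -cardsT -cardsX -(card_in_imset (f := g)).
  apply/subset_leq_card/subsetP => _ /imsetP [[b x] /setXP [_ xX] ->].
  by apply/imset2P; exists x (partner (b, x)) => //; exact: partnerP (b, x) xX.
move=> [b x] [b' x'] /setXP [_ xX] /setXP [_ x'X].
have [Pbx Pbx'] := (partnerP (b, x) xX, partnerP (b', x') x'X).
have [_ yB0 _] := partnersP Pbx; have [_ y'B0 _] := partnersP Pbx'.
have lt_b (c : bool) : (c < #|partners B x|)%N.
  by apply: leq_ltn_trans (two _ xX); case: c.
move: xX x'X; rewrite !inE => /andP [_ xB0] /andP [_ x'B0].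
move=> /(swap_inj xB0 yB0 x'B0 y'B0) /= [ex]; subst x'.
move=> {Pbx Pbx' yB0 y'B0}; rewrite /partner /= => /eqP.
by rewrite nth_uniq ?enum_uniq -?cardE ?lt_b //; case: b b' => -[].
Qed.

(* The probe point e_B0 + eps * sum of the edge directions at B0; eps is
   small enough for the probe to stay closer to e_B0 than to other vertices. *)
Definition eps : R := (#|neighbours|.*2.+1)%:R^-1.

Definition probe_weight B : R :=
  eps * (B \in neighbours)%:R + (1 - #|neighbours|%:R * eps) * (B == B0)%:R.

Definition probe : 'rV[R]_n := \sum_B probe_weight B *: chi R B.

Lemma eps_gt0 : 0 < eps. Proof. by rewrite invr_gt0 ltr0n. Qed.

Lemma probe_weight_sum (V : lmodType R) (F : {set 'I_n} -> V) :
  \sum_B probe_weight B *: F B =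
  eps *: \sum_(N in neighbours) F N + (1 - #|neighbours|%:R * eps) *: F B0.
Proof.
under eq_bigr do rewrite scalerDl -!scalerA.
rewrite big_split /= -!scaler_sumr; congr (_ *: _ + _ *: _).
  rewrite [RHS]big_mkcond; apply: eq_bigr => B _.
  by case: (B \in _); rewrite ?scale1r ?scale0r.
rewrite (bigD1 B0) //= eqxx scale1r big1 ?addr0 // => B /negbTE ->.
by rewrite scale0r.
Qed.

Lemma probe_weight_sumr (F : {set 'I_n} -> R) :
  \sum_B probe_weight B * F B =
  eps * \sum_(N in neighbours) F N + (1 - #|neighbours|%:R * eps) * F B0.
Proof. exact: (probe_weight_sum (V := R^o)). Qed.

Lemma probe_weight1 : \sum_B probe_weight B = 1.
Proof.
under eq_bigr do rewrite -[probe_weight _]mulr1.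
by rewrite probe_weight_sumr sumr_const -mulr_natr; ring.
Qed.

Lemma probe_in_polytope : base_polytope R Bs probe.
Proof.
have le1 : #|neighbours|%:R * eps <= 1.
  by rewrite ler_pdivrMr ?ltr0n // mul1r ler_nat -addnn -addnS leq_addr.
exists probe_weight; split => //; last exact: probe_weight1.
- move=> B; rewrite addr_ge0 ?mulr_ge0 ?ler0n ?subr_ge0 //; exact: ltW eps_gt0.
- move=> B BBs; rewrite /probe_weight.
  case: eqP => [eB|_]; first by rewrite eB B0s in BBs.
  by rewrite inE (negbTE BBs) /= !mulr0 addr0.
Qed.

Lemma probe_dir : probe - chi R B0 = \sum_(N in neighbours) eps *: dir N.
Proof.
rewrite conv_recentre ?probe_weight1 // probe_weight_sum /dir subrr scaler0 addr0.
by rewrite scaler_sumr.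
Qed.

Definition outside_mass (z : 'rV[R]_n) : R := \sum_(j in ~: B0) z 0 j.

Lemma outside_mass_conv (lam : {set 'I_n} -> R) :
  outside_mass (\sum_B lam B *: chi R B) = \sum_B lam B * #|B :\: B0|%:R.
Proof.
rewrite /outside_mass; under eq_bigr do rewrite summxE.
rewrite exchange_big; apply: eq_bigr => B _.
under eq_bigr do rewrite !mxE.
rewrite -mulr_sumr -big_mkcondr /= -sum1_card natr_sum; congr (_ * _).
by apply: eq_bigl => j; rewrite !inE andbC.
Qed.

Lemma probe_outside_lt1 : outside_mass probe < 1.
Proof.
rewrite outside_mass_conv probe_weight_sumr setDv cards0 mulr0 addr0.
apply: (@le_lt_trans _ _ (eps * (#|neighbours|.*2)%:R)).
  rewrite ler_wpM2l ?(ltW eps_gt0) // -mul2n natrM mulr_natr -sumr_const.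
  apply: ler_sum => N; rewrite inE ler_nat => /andP [_ /eqP sd2].
  apply: leq_trans (subset_leq_card _) (eq_leq sd2).
  by apply/subsetP => j; rewrite !inE => /andP [-> ->]; rewrite orbT.
by rewrite mulrC ltr_pdivrMr ?ltr0n // mul1r ltr_nat.
Qed.

(* A matroid polytope inside P(M) that contains the probe has e_B0 as a vertex:
   a convex combination avoiding e_B0 has outside mass at least 1. *)
Lemma piece_contains_B0 Q : {subset Q <= Bs} -> base_polytope R Q probe -> B0 \in Q.
Proof.
move=> QBs [mu [mu_ge0 muQ mu1 e]]; apply: contraT => B0Q.
suff : 1 <= outside_mass probe by rewrite leNgt probe_outside_lt1.
rewrite e outside_mass_conv -[X in X <= _]mu1; apply: ler_sum => B _.
have [BQ|BQ] := boolP (B \in Q); last by rewrite muQ // mul0r.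
rewrite ler_peMr // ler1n card_gt0; apply/set0Pn.
apply: (bases_diff_neq0 matroidBs) (QBs _ BQ) B0s _.
by apply: contraNneq B0Q => <-.
Qed.

Section SimpleVertex.
(* From here on dim P(M) = deg B0 is used through the independence of the
   edge directions at B0. *)
Hypothesis dir_free : row_free dir_mx.

Lemma nspan_coef0 (a : {set 'I_n} -> R) :
  \sum_(N in neighbours) a N *: dir N = 0 -> forall N, N \in neighbours -> a N = 0.
Proof.
move=> sum0 N Nnb.
have : (\row_k a (enum_val k)) *m dir_mx = 0 *m dir_mx.
  rewrite mul0mx mulmx_sum_row -[RHS]sum0 [RHS]big_enum_val.
  by apply: eq_bigr => k _; rewrite mxE rowK.
move/(row_free_inj dir_free)/rowP/(_ (enum_rank_in Nnb N)).
by rewrite !mxE enum_rankK_in.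
Qed.

Lemma neighbours_rank_bound (T : {set {set 'I_n}}) p (W : 'M[R]_(p, n)) :
  T \subset neighbours -> (forall N, N \in T -> (dir N <= W)%MS) -> (#|T| <= p)%N.
Proof.
move=> Tnb dirW; have [->|[N0 N0T]] := set_0Vmem T; first by rewrite cards0.
pose E := \matrix_(i < #|T|) dir (enum_val i).
have freeE : row_free E.
  apply: inj_row_free => w wE0.
  pose a N := if N \in T then w 0 (enum_rank_in N0T N) else 0.
  have sum0 : \sum_(N in neighbours) a N *: dir N = 0.
    rewrite -[RHS]wE0 mulmx_sum_row (big_setID T) /= (setIidPr Tnb).
    rewrite [X in _ + X]big1 ?addr0 => [|N]; last first.
      by rewrite !inE /a => /andP [/negbTE -> _]; rewrite scale0r.
    rewrite big_enum_val; apply: eq_bigr => i _.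
    by rewrite rowK /a enum_valP enum_valK_in.
  apply/rowP => i; rewrite mxE.
  have := nspan_coef0 sum0 (subsetP Tnb _ (enum_valP i)).
  by rewrite /a enum_valP enum_valK_in.
have /mxrankS : (E <= W)%MS.
  by apply/row_subP => i; rewrite rowK; apply/dirW/enum_valP.
by move/eqP: freeE => ->; move/leq_trans; apply; exact: rank_leq_row.
Qed.

(* Toward any other base B there are fewer than 2|B0 - B| partner swaps:
   their directions e_y - e_x live in a space of dimension
   |B0 - B| + |B - B0| - 1 = 2|B0 - B| - 1. *)
Lemma partner_swaps_lt B : B \in Bs -> B != B0 ->
  (#|partner_swaps B| < 2 * #|B0 :\: B|)%N.
Proof.
move=> Bs_B neqB; set X := B0 :\: B; set Y := B :\: B0.
have [x0 x0X] : exists x0, x0 \in X.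
  by apply: (bases_diff_neq0 matroidBs) => //; rewrite eq_sym.
have x0U : x0 \in X :|: Y by rewrite inE x0X.
have [W dirW] := unit_diffs_rank R x0U.
have : (#|partner_swaps B| <= #|(X :|: Y) :\ x0|)%N.
  apply: neighbours_rank_bound (partner_swaps_sub B) _.
  move=> _ /imset2P [x y xX /partnersP [yB yB0 _] ->].
  rewrite dir_swap; last exact: yB0.
    apply: dirW; rewrite !inE ?yB ?yB0 ?orbT //.
    by move: xX; rewrite inE => /andP [-> ->].
  by move: xX; rewrite inE => /andP [].
have disjXY : X :&: Y = set0.
  by apply/setP => j; rewrite !inE; case: (j \in B0); case: (j \in B).
have cardXY : #|X :|: Y| = (1 + #|(X :|: Y) :\ x0|)%N.
  by rewrite (cardsD1 x0 (X :|: Y)) inE x0X.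
move: cardXY; rewrite cardsU disjXY cards0 subn0 /Y -(bases_card_diff matroidBs) //.
by rewrite -/X mul2n -addnn => ->; rewrite add1n ltnS.
Qed.

Lemma unique_partner B : B \in Bs -> B != B0 ->
  exists x y, x \in B0 :\: B /\ partners B x = [set y].
Proof.
move=> Bs_B neqB.
have [x /andP [xD le1]|many] :=
  pickP (fun x => (x \in B0 :\: B) && (#|partners B x| <= 1)%N).
  have /cards1P [y Px] : #|partners B x| == 1%N.
    by rewrite eqn_leq le1 card_gt0 partners_neq0.
  by exists x, y.
have := partner_swaps_lt Bs_B neqB; rewrite ltnNge partner_swaps_card // => x xD.
by rewrite ltnNge; move: (many x); rewrite xD /= => ->.
Qed.

Section Submatroid.
Variable Q : {set {set 'I_n}}.
Hypotheses (matroidQ : is_matroid Q) (QBs : {subset Q <= Bs}) (B0Q : B0 \in Q).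

Lemma sole_partner_swap B x y : B \in Q -> x \in B0 :\: B ->
  partners B x = [set y] -> swap B y x \in Q.
Proof.
move=> BQ xD Px; have yP : y \in partners B x by rewrite Px set11.
have [yB yB0 _] := partnersP yP.
have yD : y \in B :\: B0 by rewrite inE yB yB0.
have [x' x'D sQ] := matroidQ.2 B B0 BQ B0Q y yD.
have [<-//|x'x] := eqVneq x' x.
have {}sQ : swap B y x' \in Q := sQ.
exfalso; move: xD x'D; rewrite !inE => /andP [xB xB0] /andP [x'B x'B0].
apply: (sole_partner_block Px (QBs sQ)); last by rewrite swap_diff.
by rewrite !inE xB0 eq_sym (negbTE x'x) (negbTE xB) andbF.
Qed.

Lemma submatroid_nspan B : B \in Q -> nspan Q (dir B).
Proof.
move: B; apply: (diff_card_ind B0) => B IH BQ.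
have [->|neqB] := eqVneq B B0; first by rewrite /dir subrr; exact: nspan0.
have [x [y [xD Px]]] := unique_partner (QBs BQ) neqB.
have [y' y'D sQ] := matroidQ.2 B0 B B0Q BQ x xD.
have : y' \in partners B x by rewrite inE y'D (QBs sQ).
rewrite Px inE => /eqP ey'; subst y'.
move: (xD) y'D; rewrite !inE => /andP [xB xB0] /andP [yB0 yB].
rewrite (dir_split xB0 xB yB yB0); apply: nspanD.
  by apply: IH (sole_partner_swap BQ xD Px); rewrite (card_swap_diff xB0 yB yB0).
exact: nspan_dir (swap_neighbour xB0 yB0 (QBs sQ)) sQ.
Qed.

End Submatroid.

Lemma submatroid_full Q : is_matroid Q -> {subset Q <= Bs} -> B0 \in Q ->
  {subset neighbours <= Q} -> Q = Bs.
Proof.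
move=> matroidQ QBs B0Q nbQ; apply/setP/subset_eqP; rewrite (introT subsetP QBs) /=.
apply/subsetP; apply: (diff_card_ind B0) => B IH Bs_B.
have [->//|neqB] := eqVneq B B0.
have [x [y [xD Px]]] := unique_partner Bs_B neqB.
have yP : y \in partners B x by rewrite Px set11.
have [yB yB0 sB0] := partnersP yP.
move: (xD); rewrite inE => /andP [xB xB0].
have B2Q : swap B y x \in Q.
  apply: IH (sole_partner_swap matroidBs (fun _ h => h) B0s Bs_B xD Px).
  by rewrite (card_swap_diff xB0 yB yB0).
have N1Q : swap B0 x y \in Q by apply/nbQ/swap_neighbour.
have xy : x != y by apply: contraNneq yB0 => <-.
have xD2 : x \in swap B y x :\: swap B0 x y by rewrite !inE eqxx (negbTE xy).
have [z zD sQ] := matroidQ.2 _ _ B2Q N1Q x xD2.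
have {}sQ : swap (swap B y x) x z \in Q := sQ.
have [ezy|zy] := eqVneq z y; first by move: sQ; rewrite ezy swapK.
exfalso; move: zD; rewrite !inE (negbTE zy) negb_or /=.
move=> /andP [/andP [zx _] /andP [_ zB0]].
apply: (sole_partner_block Px (QBs _ sQ)).
  by rewrite !inE xB0 eq_sym (negbTE zx) eqxx.
rewrite swap_diff // swap_diff //; exact: subD1set.
Qed.

(* A matroid polytope inside P(M) through the probe contains all edges at B0:
   the probe has nonzero coordinate eps along each of them. *)
Lemma neighbours_in_piece Q : is_matroid Q -> {subset Q <= Bs} -> B0 \in Q ->
  base_polytope R Q probe -> {subset neighbours <= Q}.
Proof.
move=> matroidQ QBs B0Q probeQ N Nnb; apply: contraT => NQ.
have [a [aQ ea]] := polytope_nspan (submatroid_nspan matroidQ QBs B0Q) probeQ.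
have sum0 : \sum_(N in neighbours) (eps - a N) *: dir N = 0.
  under eq_bigr do rewrite scalerBl.
  by rewrite sumrB -probe_dir ea subrr.
have := nspan_coef0 sum0 Nnb; rewrite aQ // subr0 => eps0.
by move: eps_gt0; rewrite eps0 ltxx.
Qed.

Lemma piece_is_whole Q : is_matroid Q ->
  (forall z, base_polytope R Q z -> base_polytope R Bs z) ->
  base_polytope R Q probe -> Q = Bs.
Proof.
move=> matroidQ sub probeQ; have QBs := polytope_sub_bases sub.
have B0Q := piece_contains_B0 QBs probeQ.
exact: submatroid_full matroidQ QBs B0Q (neighbours_in_piece matroidQ QBs B0Q probeQ).
Qed.

End SimpleVertex.
End AtVertex.

Close Scope ring_scope.

Theorem corollary6 (R : realFieldType) (n : nat) (Bs : {set {set 'I_n}}) (d : nat) :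
  is_matroid Bs -> binary Bs ->
  poly_dim (base_polytope R Bs) d ->
  (exists2 B, B \in Bs & base_graph_degree Bs B = d) ->
  indecomposable R Bs.
Proof.
move=> matroidBs /binary_sym_exchange symBs [dimP _] [B0 B0s degB0].
move=> [t [Ms [_ matroidMs cover proper _]]].
rewrite -degB0 in dimP.
have free := dir_mx_free matroidBs B0s symBs dimP.
have [i probeMi] := (cover _).1 (probe_in_polytope R B0s).
have sub z : base_polytope R (Ms i) z -> base_polytope R Bs z.
  by move=> zMi; apply/cover; exists i.
apply: (proper i) => z.
by rewrite (piece_is_whole matroidBs B0s free (matroidMs i) sub probeMi).
Qed.
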